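(* Let $G$ be a transitive permutation group on a finite set $\Omega$ and let $k$ be an integer with $k>1$. Then $G$ is imprimitive with a block of imprimitivity of size at least $k$ if and only if there exists a map $f:\Omega\to\Omega$ with kernel type $(k,1,1,\ldots,1)$ such that $G$ does not synchronize $f$.
   Context: For a permutation group $G$ on $\Omega$ and a map $f:\Omega\to\Omega$ which is not a permutation, $G$ synchronizes $f$ if the semigroup $\langle G,f\rangle$ generated by $G$ and $f$ contains a constant map. The kernel of $f$ is the partition of $\Omega$ into the nonempty inverse images $\{x f^{-1}\}$ of points $x$ in the image of $f$; the kernel type of $f$ is the partition of $n=|\Omega|$ given by the sizes of the parts of the kernel. Thus kernel type $(k,1,\ldots,1)$ means exactly one kernel class has size $k$ and all others are singletons. A block of imprimitivity is a block of a nontrivial $G$-invariant partition of $\Omega$ (one which is neither the partition into singletons nor the partition with one part). *)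

From mathcomp Require Import all_boot all_fingroup.
Set Implicit Arguments. Unset Strict Implicit. Unset Printing Implicit Defensive.

Section Defs.
Variable T : finType.

Inductive in_sgroup (G : {group {perm T}}) (f : T -> T) : (T -> T) -> Prop :=
| sg_perm (g : {perm T}) : g \in G -> in_sgroup G f (fun x => g x)
| sg_map : in_sgroup G f f
| sg_comp h1 h2 : in_sgroup G f h1 -> in_sgroup G f h2 ->
    in_sgroup G f (fun x => h2 (h1 x)).

Definition synchronizes (G : {group {perm T}}) (f : T -> T) : Prop :=
  exists h, in_sgroup G f h /\ exists c : T, forall x, h x = c.

Definition kernel (f : T -> T) : {set {set T}} :=
  [set [set y | f y == f x] | x : T].

Definition kernel_type_k1 (f : T -> T) (k : nat) : Prop :=
  exists2 A, A \in kernel f &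
    #|A| = k /\ (forall B, B \in kernel f -> B != A -> #|B| = 1%N).

Definition G_invariant_partition (G : {group {perm T}}) (P : {set {set T}}) :=
  partition P [set: T] /\
  forall g, g \in G -> forall B, B \in P -> [set g x | x in B] \in P.

Definition nontrivial_partition (P : {set {set T}}) :=
  P != [set [set x] | x : T] /\ P != [set [set: T]].

Definition imprimitive_with_block_ge (G : {group {perm T}}) (k : nat) :=
  exists P, [/\ G_invariant_partition G P, nontrivial_partition P &
    exists2 B, B \in P & k <= #|B|].

End Defs.

From mathcomp Require Import all_boot all_fingroup boolp.
Set Implicit Arguments. Unset Strict Implicit. Unset Printing Implicit Defensive.

(* If f collapses k points of a block B to a point and is the identity
   elsewhere, every element of <G, f> maps blocks to blocks and its image
   meets every block, so it is never constant.
   Conversely, call x, y collapsible when some element of <G, f> identifies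
   them, and let N x be the set of points not collapsible with x.  If f is not
   synchronized, some N x is nonempty (otherwise repeatedly collapsing two
   image points gives a constant map).  G permutes the sets N x, so by
   transitivity they all have the same size.  For a, a' in the big kernel
   class of f, f is injective on N a ∪ N a' and maps it into N (f a), hence
   N a = N a'.  So "N x = N y" is a G-invariant equivalence, not universal,
   whose class of a contains the whole kernel class of size k. *)

Lemma exists_subset_card (T : finType) (B : {set T}) k :
  k <= #|B| -> exists2 A : {set T}, A \subset B & #|A| = k.
Proof.
move=> leqkB; have : 0 < #|[set A : {set T} | A \subset B & #|A| == k]|.
  by rewrite cards_draws bin_gt0.
by case/card_gt0P => A; rewrite inE => /andP [sAB /eqP]; exists A.
Qed.

Lemma card_imset_ltn (aT rT : finType) (h : aT -> rT) (A : {set aT}) x y :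
  x \in A -> y \in A -> x != y -> h x = h y -> #|h @: A| < #|A|.
Proof.
move=> Ax Ay neqxy hxy; rewrite ltn_neqAle leq_imset_card andbT.
by apply/imset_injP => /(_ x y Ax Ay hxy); apply/eqP.
Qed.

Definition collapse_to (T : finType) (A : {set T}) (a : T) x :=
  if x \in A then a else x.

Lemma kernel_type_collapse_to (T : finType) (A : {set T}) a :
  a \in A -> kernel_type_k1 (collapse_to A a) #|A|.
Proof.
move=> Aa; set f := collapse_to A a.
have fiberE x : [set y | f y == f x] = if x \in A then A else [set x].
  apply/setP => y; rewrite inE /f /collapse_to.
  case: (boolP (x \in A)) => Ax; case: (boolP (y \in A)) => Ay.
  - by rewrite eqxx.
  - by apply: contraNF Ay => /eqP ->.
  - have /negPf -> : a != x by apply: contraNneq Ax => <-.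
    by rewrite inE; have /negPf -> : y != x by apply: contraNneq Ax => <-.
  - by rewrite inE.
exists A; first by apply/imsetP; exists a; rewrite // fiberE Aa.
split=> // _ /imsetP [x _ ->]; rewrite fiberE.
by case: ifP => _; rewrite ?eqxx ?cards1.
Qed.

Lemma kernel_type_k1_fiber_inj (T : finType) (f : T -> T) k : kernel_type_k1 f k ->
  exists x0, #|[set y | f y == f x0]| = k /\
             {in ~: [set y | f y == f x0] &, injective f}.
Proof.
move=> [_ /imsetP [x0 _ ->] [cardA singleton_fibers]]; exists x0; split=> //.
move=> y z; rewrite !inE => neq_fy _ eq_fyz.
have [w eq_w] : exists w, [set w | f w == f y] = [set w].
  apply/cards1P/eqP/singleton_fibers; first exact: imset_f.
  by apply: contra neq_fy => /eqP/setP/(_ y); rewrite !inE eqxx => /esym.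
have : y \in [set w | f w == f y] by rewrite inE.
have : z \in [set w | f w == f y] by rewrite inE eq_fyz.
by rewrite eq_w !inE => /eqP -> /eqP ->.
Qed.

Lemma preim_partition_perm (T : finType) (rT : eqType) (F : T -> rT)
    (g : {perm T}) B :
  (forall x y, (F (g x) == F (g y)) = (F x == F y)) ->
  B \in preim_partition F [set: T] -> g @: B \in preim_partition F [set: T].
Proof.
move=> eqFg /imsetP [x _ ->]; apply/imsetP; exists (g x) => //.
apply/setP => z; rewrite -[z](permKV g) mem_imset; last exact: perm_inj.
by rewrite !inE eqFg.
Qed.

Section Collapsible.
Variables (T : finType) (G : {group {perm T}}) (f : T -> T).
Local Notation sgroup := (in_sgroup G f).

Definition collapsible x y := exists2 s, sgroup s & s x = s y.

Lemma collapsible_refl x : collapsible x x.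
Proof. by exists f; first exact: sg_map. Qed.

Lemma collapsible_comp s x y :
  sgroup s -> collapsible (s x) (s y) -> collapsible x y.
Proof. by move=> Ss [t St eq_t]; exists (fun z => t (s z)); first exact: sg_comp. Qed.

Lemma collapsible_perm g x y :
  g \in G -> collapsible (g x) (g y) <-> collapsible x y.
Proof.
move=> Gg; split; first by apply: collapsible_comp; exact: sg_perm.
move=> Cxy; apply: (@collapsible_comp (fun z => (g^-1)%g z)).
  by apply: sg_perm; rewrite groupV.
by rewrite !permK.
Qed.

Lemma sgroup_image_shrink h x y :
  sgroup h -> h x != h y -> collapsible (h x) (h y) ->
  exists2 h', sgroup h' & #|h' @: [set: T]| < #|h @: [set: T]|.
Proof.
move=> Sh neq_hxy [s Ss eq_s]; exists (fun z => s (h z)); first exact: sg_comp.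
rewrite (imset_comp s h); apply: card_imset_ltn neq_hxy eq_s; exact: imset_f.
Qed.

Lemma all_collapsible_synchronizes (x0 : T) :
  (forall x y, collapsible x y) -> synchronizes G f.
Proof.
move=> collT.
suff sync_rank n h : sgroup h -> #|h @: [set: T]| < n -> synchronizes G f.
  exact: (sync_rank _ f (sg_map _ _) (ltnSn _)).
elim: n h => // n IHn h Sh; rewrite ltnS => le_h_n.
have [/existsP [x /existsP [y neq_hxy]] | /existsPn const_h] :=
  boolP [exists x, exists y, h x != h y].
  have [h' Sh' lt_h'h] := sgroup_image_shrink Sh neq_hxy (collT _ _).
  exact: IHn Sh' (leq_trans lt_h'h le_h_n).
exists h; split => //; exists (h x0) => x.
by apply/eqP; move/existsPn: (const_h x) => /(_ x0); rewrite negbK.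
Qed.
End Collapsible.

Section Uncollapsed.
Variables (T : finType) (G : {group {perm T}}) (f : T -> T).

Definition uncollapsed x : {set T} := [set y | `[< ~ collapsible G f x y >]].

Lemma uncollapsedP x y : reflect (~ collapsible G f x y) (y \in uncollapsed x).
Proof. by rewrite inE; apply: asboolP. Qed.

Lemma uncollapsed_perm g x : g \in G -> uncollapsed (g x) = g @: uncollapsed x.
Proof.
move=> Gg; apply/setP => z; rewrite -[z](permKV g) mem_imset; last exact: perm_inj.
by apply/uncollapsedP/uncollapsedP => /[swap] /(collapsible_perm _ _ _ Gg).
Qed.

Lemma card_uncollapsed x y : [transitive G, on [set: T] | 'P] ->
  #|uncollapsed x| = #|uncollapsed y|.
Proof.
move=> trG; have [g Gg ->] := atransP2 trG (in_setT x) (in_setT y).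
by rewrite /= apermE uncollapsed_perm // card_imset //; exact: perm_inj.
Qed.

Lemma uncollapsed_map x y :
  y \in uncollapsed x -> f y \in uncollapsed (f x).
Proof.
move/uncollapsedP=> NCxy; apply/uncollapsedP; apply: contra_not NCxy.
by apply: collapsible_comp; exact: sg_map.
Qed.

Lemma uncollapsed_eq a1 a2 : [transitive G, on [set: T] | 'P] -> f a1 = f a2 ->
  {in uncollapsed a1 :|: uncollapsed a2 &, injective f} ->
  uncollapsed a1 = uncollapsed a2.
Proof.
move=> trG eq_fa injf; set U := uncollapsed a1 :|: uncollapsed a2.
have sfU : f @: U \subset uncollapsed (f a1).
  apply/subsetP => _ /imsetP [y Uy ->].
  by case/setUP: Uy => /uncollapsed_map; rewrite ?eq_fa.
have cardU : #|U| <= #|uncollapsed a1|.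
  by rewrite -(card_in_imset injf) (card_uncollapsed _ (f a1)) // subset_leq_card.
have cardU2 : #|U| <= #|uncollapsed a2| by rewrite (card_uncollapsed _ a1).
have /eqP -> : uncollapsed a1 == U by rewrite eqEcard subsetUl cardU.
by apply/esym/eqP; rewrite eqEcard subsetUr cardU2.
Qed.

Lemma uncollapsed_map_neq x y : y \in uncollapsed x -> f y != f x.
Proof.
move/uncollapsedP => NCxy; apply/eqP => eq_f; apply: NCxy.
by exists f; [exact: sg_map | rewrite eq_f].
Qed.

Lemma uncollapsed_partition_invariant :
  G_invariant_partition G (preim_partition uncollapsed [set: T]).
Proof.
split; first exact: preim_partitionP.
move=> g Gg B; apply: preim_partition_perm => x y.
by rewrite !uncollapsed_perm // (inj_eq (imset_inj perm_inj)).
Qed.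

Lemma uncollapsed_partition_neqT u v : ~ collapsible G f u v ->
  preim_partition uncollapsed [set: T] != [set [set: T]].
Proof.
move=> /uncollapsedP Nuv; apply/eqP => eqP1.
have : [set y in [set: T] | uncollapsed u == uncollapsed y] \in [set [set: T]].
  by rewrite -eqP1; apply: imset_f.
move/set1P/setP/(_ v); rewrite !inE => /eqP eq_uv.
by move: Nuv; rewrite eq_uv => /uncollapsedP; apply; exact: collapsible_refl.
Qed.
End Uncollapsed.

Section BlockPreserving.
Variables (T : finType) (G : {group {perm T}}) (P : {set {set T}}) (f : T -> T).
Hypothesis invP : G_invariant_partition G P.
Hypothesis f_pblock : forall x, pblock P (f x) = pblock P x.

Let partP : partition P [set: T] := invP.1.

Lemma pblock_perm g x : g \in G -> pblock P (g x) = g @: pblock P x.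
Proof.
have /and3P [/eqP covP trivP _] := partP.
have Px : x \in cover P by rewrite covP inE.
move=> Gg; apply: def_pblock => //; first by apply: invP.2 => //; exact: pblock_mem.
by apply: imset_f; rewrite mem_pblock.
Qed.

Lemma sgroup_pblock h : in_sgroup G f h ->
  (forall x y, pblock P x = pblock P y -> pblock P (h x) = pblock P (h y)) /\
  (forall x, exists y, pblock P (h y) = pblock P x).
Proof.
elim=> [g Gg | | h1 h2 _ [comp1 onto1] _ [comp2 onto2]].
- split=> [x y eq_xy | x]; first by rewrite !pblock_perm // eq_xy.
  by exists ((g^-1)%g x); rewrite permKV.
- by split=> [x y eq_xy | x]; [rewrite !f_pblock | exists x].
- split=> [x y /comp1 /comp2 // | x].
  have [y2 <-] := onto2 x; have [y1 eq_y1] := onto1 y2.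
  by exists y1; apply: comp2.
Qed.

Lemma block_preserving_not_synchronizes :
  P != [set [set: T]] -> ~ synchronizes G f.
Proof.
move=> /eqP nontrivP [h [Sh [c const_h]]]; apply: nontrivP.
have /and3P [/eqP covP trivP nP0] := partP.
have pblock_c x : pblock P x = pblock P c.
  by have [_ /(_ x) [y <-]] := sgroup_pblock Sh; rewrite const_h.
have pblockT : pblock P c = [set: T].
  by apply/setP => y; rewrite inE -(pblock_c y) mem_pblock covP inE.
apply/setP => B; rewrite inE; apply/idP/eqP => [PB | ->].
  have /set0Pn [x Bx] : B != set0 by apply: contraNneq nP0 => <-.
  by rewrite -(def_pblock trivP PB Bx) pblock_c.
by rewrite -pblockT pblock_mem // covP inE.
Qed.
End BlockPreserving.

Lemma not_synchronizes_of_block (T : finType) (G : {group {perm T}}) P B k :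
  G_invariant_partition G P -> nontrivial_partition P -> B \in P ->
  0 < k <= #|B| -> exists f : T -> T, kernel_type_k1 f k /\ ~ synchronizes G f.
Proof.
move=> invP [_ nontrivP] PB /andP [k_gt0 leq_kB].
have [A sAB cardA] := exists_subset_card leq_kB.
have [a Aa] : exists a, a \in A by apply/set0Pn; rewrite -card_gt0 cardA.
exists (collapse_to A a); rewrite -{1}cardA; split; first exact: kernel_type_collapse_to.
apply: (block_preserving_not_synchronizes invP _ nontrivP) => x.
rewrite /collapse_to; case: ifP => // Ax.
have /and3P [_ trivP _] := invP.1.
by rewrite !(def_pblock trivP PB) // (subsetP sAB).
Qed.

Lemma imprimitive_of_not_synchronizes (T : finType) (G : {group {perm T}}) f k :
  [transitive G, on [set: T] | 'P] -> 1 < k -> kernel_type_k1 f k ->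
  ~ synchronizes G f -> imprimitive_with_block_ge G k.
Proof.
move=> trG k_gt1 /kernel_type_k1_fiber_inj [x0 [cardA injf]] not_sync.
set A := [set y | f y == f x0] in cardA injf.
have /existsNP [u /existsNP [v not_coll_uv]] : ~ forall u v, collapsible G f u v.
  by move/(all_collapsible_synchronizes x0).
have eqN a : a \in A -> uncollapsed G f a = uncollapsed G f x0.
  rewrite inE => /eqP eq_fa; apply: uncollapsed_eq => //.
  have notA y : y \in uncollapsed G f a :|: uncollapsed G f x0 -> y \in ~: A.
    by rewrite in_setC /A inE -eq_fa; case/setUP => /uncollapsed_map_neq; rewrite ?eq_fa.
  by move=> y z /notA Ay /notA Az; apply: injf.
set P := preim_partition (uncollapsed G f) [set: T].
set B := [set y in [set: T] | uncollapsed G f x0 == uncollapsed G f y].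
have PB : B \in P by apply: imset_f.
have sAB : A \subset B.
  by apply/subsetP => a Aa; rewrite /B inE in_setT (eqN a Aa) eqxx.
have leq_kB : k <= #|B| by rewrite -cardA subset_leq_card.
exists P; split; first exact: uncollapsed_partition_invariant.
  split; last exact: uncollapsed_partition_neqT not_coll_uv.
  apply/eqP => eqP1; move: PB leq_kB; rewrite eqP1 => /imsetP [w _ ->].
  by rewrite cards1 leqNgt k_gt1.
by exists B.
Qed.

Theorem theorem2 (T : finType) (G : {group {perm T}}) (k : nat) :
  [transitive G, on [set: T] | 'P] -> 1 < k ->
  (imprimitive_with_block_ge G k <->
   exists f : T -> T, kernel_type_k1 f k /\ ~ synchronizes G f).
Proof.
move=> trG k_gt1; split=> [[P [invP nontrivP [B PB leq_kB]]] | [f [kerf not_sync]]].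
  by apply: not_synchronizes_of_block invP nontrivP PB _; rewrite leq_kB ltnW.
exact: imprimitive_of_not_synchronizes kerf not_sync.
Qed.
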